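(* Let $F$ be a Ferrers diagram, $T\in\mathsf{EWtab}(F)$ and $S$ the supplementary tableau to $T$. Let $j\in\mathsf{rows}(F)$ and $k\in\mathsf{cols}(F)$ with $j>k$. Then $S_{jk}=0$ if and only if there exists $k'\in\mathsf{cols}(F)$ with $k'>j$ such that $T_{jk'}=0$ and, for all $j'\in\mathsf{rows}(F)$ with $j'<k$, if $T_{j'k'}=0$ then $T_{j'k}=0$. Otherwise $S_{jk}=1$.
   Context: Ferrers diagrams and graphs: a Ferrers diagram $F$ (English convention) of semiperimeter $n+1$ has rows and columns labeled by $0,\ldots,n$: the $n+1$ unit steps of its south-east boundary path, traversed from top-right to bottom-left, are labeled $0,\ldots,n$; a vertical step labels the row it bounds, a horizontal step the column it bounds (top row labeled $0$). $\mathsf{rows}(F)$, $\mathsf{cols}(F)$ are the label sets; $F$ has a cell in row $i$, column $j$ iff $i<j$. $G(F)$ has vertex set $\{0,\ldots,n\}$ with edges $\{i,j\}$ for $i\in\mathsf{rows}(F)$, $j\in\mathsf{cols}(F)$, $i<j$. Sandpile model on $G(F)$ with sink $0$: configurations $c\in\mathbb{N}^n$; non-sink $v$ unstable if $c_v\ge\deg(v)$; toppling sends one grain to each neighbour (grains to $0$ disappear); toppling the sink adds one grain to each neighbour of $0$. Canonical toppling of a recurrent configuration $c$: topple the sink ($U^{(0)}_c=\{0\}$), then alternately topple simultaneously all unstable vertices in $\mathsf{cols}(F)$ ($V^{(1)}_c$), all unstable in $\mathsf{rows}(F)$ ($U^{(1)}_c$), etc.; $\mathsf{CanonTop}(c)=(U^{(0)}_c,V^{(1)}_c,U^{(1)}_c,\ldots)$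 is an ordered partition of $\{0,\ldots,n\}$. EW-tableaux: $0/1$-fillings $T$ of $F$ ($T_{ij}$ = entry in row $i$, column $j$) with top row all 1s, a 0 in every other row, and no rectangle with 0s in two diagonally opposite corners and 1s in the other two; $\mathsf{EWtab}(F)$ is their set. $\phi_{TC}(T)$ is the (recurrent) configuration with $c_i$ = number of 1s in row $i$ ($i\in\mathsf{rows}(F)$), $c_i$ = number of 0s in column $i$ ($i\in\mathsf{cols}(F)$). $\mathsf{CanonTop}(T):=\mathsf{CanonTop}(\phi_{TC}(T))$. Supplementary tableau $S=S(T)$: the rectangular $|\mathsf{rows}(F)|\times|\mathsf{cols}(F)|$ array with $S_{ij}=1$ if row label $i$ lies in an earlier block of $\mathsf{CanonTop}(T)$ than column label $j$, and $S_{ij}=0$ otherwise. *)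

From mathcomp Require Import all_boot.
Set Implicit Arguments. Unset Strict Implicit. Unset Printing Implicit Defensive.

(* A Ferrers diagram of semiperimeter n+1 is encoded by the set R of row
   labels among {0,...,n} (= 'I_n.+1); the column labels are the others.
   Being a genuine Ferrers diagram means 0 \in R and n \notin R
   (hypotheses of the theorem). *)

Section Ferrers.
Variable n : nat.
Variable R : {set 'I_n.+1}.

Definition is_cell (i j : 'I_n.+1) : bool := [&& i \in R, j \notin R & i < j].

Definition ferrers_adj : rel 'I_n.+1 := fun u v => is_cell u v || is_cell v u.

Definition fdeg (v : 'I_n.+1) : nat := #|[set u | ferrers_adj u v]|.

(* configurations: the value at the sink 0 is irrelevant (kept at 0) *)
Definition config := 'I_n.+1 -> nat.

Definition topple_set (c : config) (A : {set 'I_n.+1}) : config :=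
  fun v => if v == ord0 then 0
           else c v - (v \in A) * fdeg v + #|[set u in A | ferrers_adj u v]|.

Definition unstable (c : config) (v : 'I_n.+1) : bool :=
  (v != ord0) && (fdeg v <= c v).

(* Steps 0,1,2,3,... correspond
   to the blocks U^(0), V^(1), U^(1), V^(2), ... *)
Fixpoint canon_step (c : config) (t : nat) : config * {set 'I_n.+1} :=
  match t with
  | 0 => (topple_set c [set ord0], [set ord0])
  | t'.+1 =>
      let c' := (canon_step c t').1 in
      let A := [set v | unstable c' v && ((v \in R) == ~~ odd t'.+1)] in
      (topple_set c' A, A)
  end.

(* index of the block of CanonTop(c) containing v (first step at which v
   topples; 2n+4 steps are more than enough) *)
Definition canon_block (c : config) (v : 'I_n.+1) : nat :=
  find (fun t => v \in (canon_step c t).2) (iota 0 (2 * n.+2)).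

(* 0/1 fillings: T i j = true means entry 1 (only cells are relevant) *)
Definition filling := 'I_n.+1 -> 'I_n.+1 -> bool.

Definition is_EWtab (T : filling) : Prop :=
  [/\ (forall j, is_cell ord0 j -> T ord0 j),
      (forall i, i \in R -> i != ord0 -> exists j, is_cell i j && ~~ T i j) &
      (forall i i' j j' : 'I_n.+1, i < i' -> j < j' ->
         is_cell i j -> is_cell i j' -> is_cell i' j -> is_cell i' j' ->
         ~ ([&& ~~ T i j, ~~ T i' j', T i j' & T i' j] ||
            [&& ~~ T i j', ~~ T i' j, T i j & T i' j']))].

Definition phiTC (T : filling) : config :=
  fun i => if i \in R then #|[set j | is_cell i j && T i j]|
           else #|[set j | is_cell j i && ~~ T j i]|.

(* supplementary tableau, indexed by labels (i a row label, j a column label) *)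
Definition supp_tab (T : filling) (i j : 'I_n.+1) : bool :=
  canon_block (phiTC T) i < canon_block (phiTC T) j.

End Ferrers.

(* Orient each edge of G(F) by T: a 1 in cell (i,k) gives the arc i -> k, a 0 gives k -> i.
   Then phi_TC(T) is the out-degree, the sink is a source, and the rectangle condition of
   EW-tableaux makes the orientation acyclic. Conservation of grains shows that a vertex
   topples at most once and that it topples as soon as all its in-neighbours have toppled
   and the step has its parity; by acyclicity every vertex topples. Hence block indices
   strictly increase along arcs, and every vertex v <> 0 has an in-neighbour at most two
   blocks before it. For a row j and a column k < j: if block k < block j, the in-neighbour
   k' of j two blocks before it is a column of the parity of k, so block k <= block k' and
   the arcs k' -> j' and j' -> k would contradict each other; if block j < block k, the
   in-neighbour i of k two blocks before it has T i k' = 1, and i -> k' -> j puts j at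
   least two blocks after i, hence not before k. *)

From mathcomp Require Import all_boot zify.
Set Implicit Arguments. Unset Strict Implicit. Unset Printing Implicit Defensive.

Section CanonicalToppling.
Variables (n : nat) (R : {set 'I_n.+1}) (c : config n).
Hypothesis c_lt_deg : forall v, v != ord0 -> c v < fdeg R v.

Definition toppled t := (canon_step R c t).2.
Definition config_after t := (canon_step R c t).1.
Definition toppled_by t := \bigcup_(s < t.+1) toppled s.
Definition nbrs_toppled t v := #|[set u in toppled_by t | ferrers_adj R u v]|.

Lemma toppled0 : toppled 0 = [set ord0].
Proof. by []. Qed.

Lemma toppledS t :
  toppled t.+1 = [set v | unstable R (config_after t) v && ((v \in R) == ~~ odd t.+1)].
Proof. by []. Qed.

Lemma config_after0 : config_after 0 = topple_set R c [set ord0].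
Proof. by []. Qed.

Lemma config_afterS t : config_after t.+1 = topple_set R (config_after t) (toppled t.+1).
Proof. by []. Qed.

Lemma toppled_byP t v : reflect (exists2 s, s <= t & v \in toppled s) (v \in toppled_by t).
Proof.
apply: (iffP bigcupP) => [[s _ vs]|[s st vs]]; first by exists s; rewrite // -ltnS.
by exists (Ordinal (st : s < t.+1)).
Qed.

Lemma toppled_by0 : toppled_by 0 = [set ord0].
Proof. by rewrite /toppled_by big_ord1. Qed.

Lemma toppled_byS t : toppled_by t.+1 = toppled_by t :|: toppled t.+1.
Proof. by rewrite /toppled_by big_ord_recr. Qed.

Lemma toppled_by_mono s t : s <= t -> toppled_by s \subset toppled_by t.
Proof.
move=> st; apply/subsetP => v /toppled_byP[r rs vr].
by apply/toppled_byP; exists r; first exact: leq_trans st.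
Qed.

Lemma sink_toppled_by t : ord0 \in toppled_by t.
Proof. by apply/toppled_byP; exists 0; rewrite ?toppled0 ?set11. Qed.

Lemma nbrs_toppled_le_deg t v : nbrs_toppled t v <= fdeg R v.
Proof. by apply: subset_leq_card; apply/subsetP => u; rewrite !inE => /andP[]. Qed.

Lemma stable_of_balance t (d : config n) v :
  (v != ord0 -> d v + (v \in toppled_by t) * fdeg R v = c v + nbrs_toppled t v) ->
  v \in toppled_by t -> ~~ unstable R d v.
Proof.
move=> balance vD; have [->|v0] := eqVneq v ord0; first by rewrite /unstable eqxx.
rewrite /unstable v0 -ltnNge; have := balance v0; rewrite vD mul1n.
have := c_lt_deg v0; have := nbrs_toppled_le_deg t v; lia.
Qed.

Lemma config_after_balance t v : v != ord0 ->
  config_after t v + (v \in toppled_by t) * fdeg R v = c v + nbrs_toppled t v.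
Proof.
elim: t v => [|t IH] v v0.
  by rewrite config_after0 /topple_set /nbrs_toppled toppled_by0 !inE (negbTE v0) mul0n subn0 addn0.
have fresh_top u : u \in toppled t.+1 -> u \notin toppled_by t.
  by rewrite toppledS inE => /andP[uu _]; apply: contraL uu; apply: stable_of_balance (IH u).
have nbrsS : nbrs_toppled t.+1 v =
    nbrs_toppled t v + #|[set u in toppled t.+1 | ferrers_adj R u v]|.
  rewrite /nbrs_toppled -[RHS]subn0 -(cards0 'I_n.+1).
  have <- : [set u in toppled_by t | ferrers_adj R u v] :&:
            [set u in toppled t.+1 | ferrers_adj R u v] = set0.
    apply/setP => u; rewrite in_set0.
    by apply/setIP => -[/setIdP[uD _] /setIdP[/fresh_top]]; rewrite uD.
  by rewrite -cardsU; apply: eq_card => u; rewrite toppled_byS !inE andb_orl.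
rewrite config_afterS /topple_set (negbTE v0) nbrsS toppled_byS in_setU.
have := IH v v0; have [vA|vA] := boolP (v \in toppled t.+1).
  have unst : fdeg R v <= config_after t v.
    by move: vA; rewrite toppledS inE => /andP[/andP[]].
  rewrite (negbTE (fresh_top v vA)) /= mul1n mul0n addn0; lia.
rewrite orbF mul0n subn0; case: (v \in toppled_by t); lia.
Qed.

Lemma toppled_by_stable t v : v \in toppled_by t -> ~~ unstable R (config_after t) v.
Proof. exact/stable_of_balance/config_after_balance. Qed.

Lemma toppled_fresh s v : v \in toppled s.+1 -> v \notin toppled_by s.
Proof. by rewrite toppledS inE => /andP[vu _]; apply: contraL vu; apply: toppled_by_stable. Qed.

Lemma toppled_once s s' v : v \in toppled s -> v \in toppled s' -> s = s'.
Proof.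
have late r r' : r < r' -> v \in toppled r -> v \notin toppled r'.
  case: r' => // r' rr' vr; apply/negP => /toppled_fresh/negP; apply.
  by apply/toppled_byP; exists r.
move=> vs vs'; case: (ltngtP s s') => [lt|lt|//].
  by rewrite (negbTE (late _ _ lt vs)) in vs'.
by rewrite (negbTE (late _ _ lt vs')) in vs.
Qed.

Lemma canon_block_toppled s v : s < 2 * n.+2 -> v \in toppled s -> canon_block R c v = s.
Proof.
move=> sN vs; set P := fun t => v \in toppled t.
have hasP : has P (iota 0 (2 * n.+2)) by apply/hasP; exists s; rewrite ?mem_iota.
have fN : find P (iota 0 (2 * n.+2)) < 2 * n.+2.
  by rewrite -[X in _ < X](size_iota 0) -has_find.
have := nth_find 0 hasP; rewrite nth_iota // add0n => vf.
exact: toppled_once vf vs.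
Qed.

Lemma toppled_parity s v : ord0 \in R -> v \in toppled s -> (v \in R) = ~~ odd s.
Proof.
move=> sink_row; case: s => [|s]; first by rewrite toppled0 inE => /eqP ->.
by rewrite toppledS inE => /andP[_ /eqP].
Qed.

Lemma toppled_deg_le s v : v \in toppled s.+1 -> fdeg R v <= c v + nbrs_toppled s v.
Proof.
move=> vA; have := vA; rewrite toppledS inE => /andP[/andP[v0 unst] _].
by have := config_after_balance s v0; rewrite (negbTE (toppled_fresh vA)) mul0n addn0 => <-.
Qed.

Lemma untoppled_deficit s v : v != ord0 -> v \notin toppled_by s.+1 ->
  (v \in R) = ~~ odd s.+1 -> c v + nbrs_toppled s v < fdeg R v.
Proof.
rewrite toppled_byS inE negb_or => v0 /andP[vD vA] par.
move: vA; rewrite toppledS inE par eqxx andbT /unstable v0 -ltnNge.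
by have := config_after_balance s v0; rewrite (negbTE vD) mul0n addn0 => <-.
Qed.

End CanonicalToppling.

Section EWTableau.
Variables (n : nat) (R : {set 'I_n.+1}) (T : filling n).
Hypotheses (sink_row : ord0 \in R) (EW : is_EWtab R T).

Definition tab_arc (u v : 'I_n.+1) : bool :=
  (is_cell R u v && T u v) || (is_cell R v u && ~~ T v u).

Lemma tab_arc_from_row u v : u \in R -> tab_arc u v = is_cell R u v && T u v.
Proof. by move=> uR; rewrite /tab_arc {2}/is_cell uR andbF orbF. Qed.

Lemma tab_arc_from_col u v : u \notin R -> tab_arc u v = is_cell R v u && ~~ T v u.
Proof. by move=> uR; rewrite /tab_arc {1}/is_cell (negbTE uR). Qed.

Lemma tab_arc_to_row u v : v \in R -> tab_arc u v = is_cell R v u && ~~ T v u.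
Proof. by move=> vR; rewrite /tab_arc {1}/is_cell vR andbF. Qed.

Lemma tab_arc_to_col u v : v \notin R -> tab_arc u v = is_cell R u v && T u v.
Proof. by move=> vR; rewrite /tab_arc {2}/is_cell (negbTE vR) orbF. Qed.

Lemma tab_arc_cell i k : is_cell R i k -> tab_arc i k = T i k.
Proof. by move=> ik; rewrite tab_arc_from_row ?ik //; case/and3P: ik. Qed.

Lemma tab_arc_cell_rev i k : is_cell R i k -> tab_arc k i = ~~ T i k.
Proof. by move=> ik; rewrite tab_arc_to_row ?ik //; case/and3P: ik. Qed.

Lemma tab_arc_asym u v : tab_arc u v -> ~~ tab_arc v u.
Proof.
have [uR|uR] := boolP (u \in R).
  by rewrite tab_arc_from_row // => /andP[uv Tuv]; rewrite tab_arc_cell_rev // Tuv.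
by rewrite tab_arc_from_col // => /andP[vu Tvu]; rewrite tab_arc_cell.
Qed.

Lemma ferrers_adj_arc u v : ferrers_adj R u v = tab_arc u v || tab_arc v u.
Proof.
rewrite /ferrers_adj /tab_arc.
by case: (is_cell R u v); case: (is_cell R v u); case: (T u v); case: (T v u).
Qed.

Lemma phiTC_out_arcs v : phiTC R T v = #|[set u | tab_arc v u]|.
Proof.
rewrite /phiTC; case: ifPn => vR; apply: eq_card => u; rewrite !inE.
  by rewrite tab_arc_from_row.
by rewrite tab_arc_from_col.
Qed.

Lemma fdeg_arcs v : fdeg R v = #|[set u | tab_arc v u]| + #|[set u | tab_arc u v]|.
Proof.
have disj : [set u | tab_arc v u] :&: [set u | tab_arc u v] = set0.
  by apply/setP => u; rewrite !inE; apply/negP => /andP[/tab_arc_asym/negP].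
rewrite -[RHS]subn0 -(cards0 'I_n.+1) -disj -cardsU.
by apply: eq_card => u; rewrite !inE ferrers_adj_arc orbC.
Qed.

Lemma tab_arc_to_sink u : tab_arc u ord0 = false.
Proof.
rewrite tab_arc_to_row //; apply/negP => /andP[c0u].
by case: EW => top _ _; rewrite top.
Qed.

Lemma exists_in_arc v : v != ord0 -> exists u, tab_arc u v.
Proof.
move=> v0; case: EW => top zero _; have [vR|vR] := boolP (v \in R).
  by have [k /andP[vk Tvk]] := zero v vR v0; exists k; rewrite tab_arc_cell_rev.
have c0v : is_cell R ord0 v by rewrite /is_cell sink_row vR lt0n.
by exists ord0; rewrite tab_arc_cell // top.
Qed.

Lemma phiTC_lt_deg v : v != ord0 -> phiTC R T v < fdeg R v.
Proof.
move=> /exists_in_arc[u uv]; rewrite phiTC_out_arcs fdeg_arcs -[X in X < _]addn0 ltn_add2l.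
by rewrite card_gt0; apply/set0Pn; exists u; rewrite inE.
Qed.

Lemma tab_arc_shortcut a b c d :
  a \in R -> tab_arc a b -> tab_arc b c -> tab_arc c d -> b < d -> tab_arc a d.
Proof.
move=> aR; rewrite tab_arc_from_row // => /andP[ab Tab].
have /and3P[_ bR ltab] := ab.
rewrite tab_arc_from_col // => /andP[cb Tcb].
have /and3P[cR _ _] := cb.
rewrite tab_arc_from_row // => /andP[cd Tcd] bd.
have /and3P[_ dR _] := cd.
have ad : is_cell R a d by rewrite /is_cell aR dR (ltn_trans ltab bd).
rewrite tab_arc_cell //; apply/negPn/negP => Tad; case: EW => _ _ rect.
have [ac|ca|/val_inj eac] := ltngtP a c.
- by apply: (rect a c b d) => //; rewrite Tab Tcd Tcb Tad orbT.
- by apply: (rect c a b d) => //; rewrite Tab Tcd Tcb Tad.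
- by move: Tcb; rewrite -eac Tab.
Qed.

Lemma tab_arc_acyclic (X : {set 'I_n.+1}) :
  (forall v, v \in X -> exists2 u, u \in X & tab_arc u v) -> X = set0.
Proof.
have [m] := ubnP #|X|; elim: m X => // m IH X ltXm closedX.
case: (set_0Vmem X) => // -[x xX].
case: (arg_maxnP (fun v : 'I_n.+1 => val v) xX) => k0 k0X k0max.
have {}k0X : k0 \in X := k0X.
have k0R : k0 \notin R.
  apply/negP => k0R; have [k kX] := closedX k0 k0X.
  rewrite tab_arc_to_row // => /andP[/and3P[_ _ lt] _].
  by have := k0max k kX; rewrite /= leqNgt lt.
have [i iX ik0] := closedX k0 k0X.
(* Keep the rows pointing to the largest element k0 and the columns pointing to them:
   by [tab_arc_shortcut] every in-neighbour of such a column again points to k0. *)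
pose X' := [set v in X | tab_arc v k0 || [exists u in X, tab_arc u k0 && tab_arc v u]].
suff : X' = set0 by move/setP/(_ i); rewrite !inE iX ik0.
apply: IH => [|v].
  have k0X' : k0 \notin X'.
    rewrite inE k0X /=; apply/norP; split.
      by apply/negP => kk; move: (tab_arc_asym kk); rewrite kk.
    by apply/negP => /exists_inP[u _ /andP[uk0 k0u]]; move: (tab_arc_asym uk0); rewrite k0u.
  have ltX'X : #|X'| < #|X|.
    apply: proper_card; apply/properP; split; last by exists k0.
    by apply/subsetP => v; rewrite inE => /andP[].
  exact: leq_trans ltX'X (ltnSE ltXm).
rewrite inE => /andP[vX /orP[vk0 | /exists_inP[u uX /andP[uk0 vu]]]];
  have [w wX wv] := closedX v vX; exists w; rewrite // inE wX.
  by apply/orP; right; apply/exists_inP; exists v; rewrite ?vk0.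
have /andP[/and3P[uR _ _] _] : is_cell R u k0 && T u k0 by rewrite -tab_arc_to_col.
have /andP[/and3P[_ vR _] _] : is_cell R u v && ~~ T u v by rewrite -tab_arc_to_row.
have /andP[/and3P[wR _ _] _] : is_cell R w v && T w v by rewrite -tab_arc_to_col.
have vk0 : v < k0.
  have le_vk0 : val v <= val k0 := k0max v vX.
  rewrite ltn_neqAle le_vk0 andbT; apply: contraTneq vu => /val_inj ->.
  exact: tab_arc_asym.
by rewrite (tab_arc_shortcut wR wv vu uk0 vk0).
Qed.

Local Notation c := (phiTC R T).
Local Notation block := (canon_block R c).

Lemma untoppled_in_arc s v : v != ord0 -> v \notin toppled_by R c s.+1 ->
  (v \in R) = ~~ odd s.+1 -> exists2 u, tab_arc u v & u \notin toppled_by R c s.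
Proof.
move=> v0 vD par; have := untoppled_deficit phiTC_lt_deg v0 vD par.
rewrite fdeg_arcs phiTC_out_arcs ltn_add2l => lt.
have /subsetPn[u] :
    ~~ ([set u | tab_arc u v] \subset [set u in toppled_by R c s | ferrers_adj R u v]).
  by apply: contraTN lt => /subset_leq_card; rewrite -leqNgt.
rewrite !inE ferrers_adj_arc => uv; rewrite uv /= andbT => uD.
by exists u.
Qed.

Lemma toppled_by_stall t :
  toppled_by R c t.+2 \subset toppled_by R c t -> toppled_by R c t = setT.
Proof.
move=> stall; rewrite -[LHS]setCK (tab_arc_acyclic (X := ~: toppled_by R c t)) ?setC0 //.
move=> v; rewrite inE => vD.
have v0 : v != ord0 by apply: contraNneq vD => ->; exact: sink_toppled_by.
have [s /andP[ts st] par] : exists2 s, t <= s < t.+2 & (v \in R) = ~~ odd s.+1.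
  have [/eqP par|npar] := boolP ((v \in R) == ~~ odd t.+1).
    by exists t; rewrite // leqnn ltnW.
  exists t.+1; first by rewrite leqnSn ltnSn.
  move: npar => /=.
  by case: (v \in R); case: (odd t).
have vDs : v \notin toppled_by R c s.+1.
  by move: vD; apply: contra => /(subsetP (subset_trans (toppled_by_mono _ _ st) stall)).
have [u uv uD] := untoppled_in_arc v0 vDs par.
exists u; rewrite // inE; move: uD; apply: contra.
exact: (subsetP (toppled_by_mono _ _ ts)).
Qed.

Lemma card_toppled_by m : minn m.+1 n.+1 <= #|toppled_by R c (2 * m)|.
Proof.
elim: m => [|m IH]; first by rewrite muln0 toppled_by0 cards1; lia.
have -> : 2 * m.+1 = (2 * m).+2 by lia.
have [stall|grow] := boolP (toppled_by R c (2 * m).+2 \subset toppled_by R c (2 * m)).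
  have full : toppled_by R c (2 * m).+2 = setT.
    apply/eqP; rewrite eqEsubset subsetT -(toppled_by_stall stall).
    by apply: toppled_by_mono; lia.
  by rewrite full cardsT card_ord; lia.
have : #|toppled_by R c (2 * m)| < #|toppled_by R c (2 * m).+2|.
  by apply: proper_card; rewrite properE grow andbT; apply: toppled_by_mono; lia.
lia.
Qed.

Lemma toppled_by_all : toppled_by R c (2 * n) = setT.
Proof.
apply/eqP; rewrite eqEcard subsetT cardsT card_ord.
by have := card_toppled_by n; rewrite minnn.
Qed.

Lemma toppledE s v : (v \in toppled R c s) = (block v == s).
Proof.
have /toppled_byP[r rn vr] : v \in toppled_by R c (2 * n) by rewrite toppled_by_all inE.
have rN : r < 2 * n.+2 by lia.
rewrite (canon_block_toppled phiTC_lt_deg rN vr).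
by apply/idP/eqP => [vs|<-//]; exact: (toppled_once phiTC_lt_deg vr vs).
Qed.

Lemma toppled_byE t v : (v \in toppled_by R c t) = (block v <= t).
Proof.
apply/toppled_byP/idP => [[s st]|le]; first by rewrite toppledE => /eqP ->.
by exists (block v); rewrite ?toppledE.
Qed.

Lemma block_parity v : (v \in R) = ~~ odd (block v).
Proof. by apply: toppled_parity sink_row (_ : v \in toppled R c _); rewrite toppledE. Qed.

Lemma tab_arc_block_lt u v : tab_arc u v -> block u < block v.
Proof.
move: u; have [m] := ubnP (block v); elim: m v => // m IH v ltvm u uv.
case ev : (block v) => [|s].
  by move: uv; move/eqP: ev; rewrite -toppledE toppled0 inE => /eqP ->; rewrite tab_arc_to_sink.
have vs : v \in toppled R c s.+1 by rewrite toppledE ev.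
have sat := toppled_deg_le phiTC_lt_deg vs.
rewrite fdeg_arcs phiTC_out_arcs leq_add2l in sat.
have nbr_in : [set w in toppled_by R c s | ferrers_adj R w v] \subset [set w | tab_arc w v].
  apply/subsetP => w; rewrite !inE toppled_byE ferrers_adj_arc => /andP[ws /orP[//|vw]].
  have ltw : block w < m by move: ltvm; rewrite ev; lia.
  by move: (IH w ltw v vw); rewrite ev ltnNge (leqW ws).
have /eqP nbr_eq : [set w in toppled_by R c s | ferrers_adj R w v] == [set w | tab_arc w v].
  by rewrite eqEcard nbr_in; exact: sat.
have : u \in [set w in toppled_by R c s | ferrers_adj R w v] by rewrite nbr_eq inE.
by rewrite inE toppled_byE => /andP[us _].
Qed.

Lemma in_arc_block v : v != ord0 -> exists2 u, tab_arc u v & block v <= (block u).+2.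
Proof.
move=> v0; have [le2|gt2] := leqP (block v) 2.
  by have [u uv] := exists_in_arc v0; exists u => //; lia.
(* v did not topple two steps earlier, although that step has its parity *)
have vD : v \notin toppled_by R c (block v - 3).+1 by rewrite toppled_byE; lia.
have par : (v \in R) = ~~ odd (block v - 3).+1.
  have e : block v = (block v - 3).+1 + 2 by lia.
  by rewrite block_parity {1}e oddD addbF.
have [u uv uD] := untoppled_in_arc v0 vD par.
by exists u => //; move: uD; rewrite toppled_byE; lia.
Qed.

Lemma block_row_col_neq i k : i \in R -> k \notin R -> block i != block k.
Proof.
move=> iR kR; apply: contraNneq kR => eik.
by rewrite block_parity -eik -block_parity.
Qed.

Lemma witness_of_block_lt j k : j \in R -> k \notin R -> k < j -> block k < block j ->
  exists k', [/\ k' \notin R, j < k', T j k' = false &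
    forall j', j' \in R -> j' < k -> T j' k' = false -> T j' k = false].
Proof.
move=> jR kR kj lt.
have j0 : j != ord0 by rewrite -lt0n (leq_ltn_trans _ kj).
have [k' k'j jk'] := in_arc_block j0.
have /andP[/and3P[_ k'R ltjk'] Tjk'] : is_cell R j k' && ~~ T j k' by rewrite -tab_arc_to_row.
have kk' : block k <= block k'.
  have := tab_arc_block_lt k'j; have := block_parity k; have := block_parity k'.
  rewrite (negbTE kR) (negbTE k'R); lia.
exists k'; split => //; first exact: negbTE.
move=> j' j'R j'k Tj'k'.
have k'j' : tab_arc k' j' by rewrite tab_arc_cell_rev ?Tj'k' // /is_cell j'R k'R; lia.
apply/negbTE/negP => Tj'k.
have j'k_arc : tab_arc j' k by rewrite tab_arc_cell // /is_cell j'R kR.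
by have := tab_arc_block_lt k'j'; have := tab_arc_block_lt j'k_arc; lia.
Qed.

Lemma block_le_of_witness j k k' : j \in R -> k \notin R -> k < j ->
  k' \notin R -> j < k' -> T j k' = false ->
  (forall j', j' \in R -> j' < k -> T j' k' = false -> T j' k = false) ->
  block k <= block j.
Proof.
move=> jR kR kj k'R jk' Tjk' cover.
have k0 : k != ord0 by apply: contraNneq kR => ->.
have [i ik ki] := in_arc_block k0.
have /andP[/and3P[iR _ ltik] _] : is_cell R i k && T i k by rewrite -tab_arc_to_col.
have ik' : tab_arc i k'.
  rewrite tab_arc_cell; last by rewrite /is_cell iR k'R; lia.
  apply: contraTT ik => /negbTE/(cover i iR ltik) Tik.
  by rewrite tab_arc_to_col // Tik andbF.
have k'j : tab_arc k' j by rewrite tab_arc_cell_rev ?Tjk' // /is_cell jR k'R.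
by have := tab_arc_block_lt ik'; have := tab_arc_block_lt k'j; lia.
Qed.

End EWTableau.

Theorem proposition4p15 (n : nat) (R : {set 'I_n.+1}) (T : 'I_n.+1 -> 'I_n.+1 -> bool)
    (j k : 'I_n.+1) :
  ord0 \in R -> ord_max \notin R ->
  is_EWtab R T ->
  j \in R -> k \notin R -> k < j ->
  (supp_tab R T j k = false <->
   exists k' : 'I_n.+1,
     [/\ k' \notin R, j < k', T j k' = false &
         forall j' : 'I_n.+1, j' \in R -> j' < k -> T j' k' = false -> T j' k = false]).
Proof.
move=> sink_row _ EW jR kR kj; rewrite /supp_tab; split.
  move=> /negbT; rewrite -leqNgt leq_eqVlt eq_sym.
  rewrite (negbTE (block_row_col_neq sink_row EW jR kR)) /=.
  exact: witness_of_block_lt.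
move=> [k' [k'R jk' Tjk' cover]]; apply/negbTE; rewrite -leqNgt.
exact: (block_le_of_witness sink_row EW jR kR kj k'R jk' Tjk' cover).
Qed.
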